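(* Let $(E,d)$ be a Polish space and $\mu\in(0,1)$. For any $f\in D^{\mu}([0,1],E)$, \[ [f]_{\wedge\mu}\le[f]_{\mu}\le 2[f]_{\sim\mu}\le\frac{2}{1-2^{-\mu}}[f]_{\wedge\mu}. \]
   Context: $D([0,1],E)$ is the space of càdlàg $E$-valued functions on $[0,1]$. For $0\le s\le t\le u\le 1$, $\Delta(f;s,t,u)=d(f(s),f(t))\wedge d(f(t),f(u))$, and $[f]_\mu=\sup_{0\le s\le t\le u\le 1}\frac{\Delta(f;s,t,u)}{|u-s|^\mu}$. $D^{\mu}([0,1],E)$ is the set of $f\in D([0,1],E)$ with $[f]_\mu+\sup_{t\in(0,1]}\frac{d(f(0),f(t))}{t^\mu}+\sup_{t\in[0,1)}\frac{d(f(1),f(t))}{|1-t|^\mu}<\infty$. For $0\le\sigma<\tau\le1$, $N(f;(\sigma,\tau))=\inf_{\sigma<\theta\le\tau}\sup_{s\in[\sigma,\theta),\,u\in[\theta,\tau]}\left[d(f(\sigma),f(s))\vee d(f(u),f(\tau))\right]$; for $\eta>0$, $N(f;\eta)=\sup_{0\le\sigma<\tau\le 1,\ \tau-\sigma\le\eta}N(f;(\sigma,\tau))$; $[f]_{\sim\mu}=\sup_{\eta>0}\frac{N(f;\eta)}{\eta^\mu}$. Finally $[f]_{\wedge\mu}=\sup_{0<s<u\le 1}\frac{\Delta\left(f;s,\frac{s+u}{2},u\right)}{|u-s|^{\mu}}$. *)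

From HB Require Import structures.
From mathcomp Require Import all_boot all_order all_algebra.
From mathcomp Require Import all_classical all_reals all_analysis.
Set Implicit Arguments. Unset Strict Implicit. Unset Printing Implicit Defensive.
Import Order.TTheory GRing.Theory Num.Theory.
Local Open Scope classical_set_scope.
Local Open Scope ring_scope.

Section Defs.
Variables (R : realType) (E : Type) (d : E -> E -> R).

Definition is_metric : Prop :=
  [/\ forall x y, 0 <= d x y,
      forall x y, d x y = 0 <-> x = y,
      forall x y, d x y = d y x &
      forall x y z, d x z <= d x y + d y z].

Definition polish : Prop :=
  is_metric /\
  (forall u : nat -> E,
     (forall eps : R, 0 < eps -> exists N : nat, forall m n : nat,
        (N <= m)%N -> (N <= n)%N -> d (u m) (u n) < eps) ->
     exists x : E, forall eps : R, 0 < eps -> exists N : nat, forall n : nat,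
        (N <= n)%N -> d (u n) x < eps) /\
  (exists D : set E, countable D /\
     forall (x : E) (eps : R), 0 < eps -> exists2 y, D y & d x y < eps).

(* f : [0,1] -> E is càdlàg (values of f outside [0,1] are irrelevant) *)
Definition cadlag (f : R -> E) : Prop :=
  (forall t : R, 0 <= t < 1 -> forall eps : R, 0 < eps ->
     exists2 delta : R, 0 < delta &
       forall s : R, t <= s -> s < t + delta -> s <= 1 -> d (f s) (f t) < eps) /\
  (forall t : R, 0 < t <= 1 -> exists l : E, forall eps : R, 0 < eps ->
     exists2 delta : R, 0 < delta &
       forall s : R, 0 <= s -> t - delta < s -> s < t -> d (f s) l < eps).

Definition Delta (f : R -> E) (s t u : R) : R := Num.min (d (f s) (f t)) (d (f t) (f u)).

Local Open Scope ereal_scope.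

(* [f]_mu  (quotients with u = s have Delta = 0 and count as 0) *)
Definition holder_semi (mu : R) (f : R -> E) : \bar R :=
  ereal_sup [set x : \bar R | exists s t u : R,
     [/\ (0 <= s)%R, (s <= t)%R, (t <= u)%R, (u <= 1)%R &
         x = ((Delta f s t u / (u - s) `^ mu)%R)%:E]].

Definition endpoint0 (mu : R) (f : R -> E) : \bar R :=
  ereal_sup [set x : \bar R | exists t : R,
     [/\ (0 < t)%R, (t <= 1)%R & x = ((d (f 0%R) (f t) / t `^ mu)%R)%:E]].

Definition endpoint1 (mu : R) (f : R -> E) : \bar R :=
  ereal_sup [set x : \bar R | exists t : R,
     [/\ (0 <= t)%R, (t < 1)%R & x = ((d (f 1%R) (f t) / `|1 - t| `^ mu)%R)%:E]].

Definition in_Dmu (mu : R) (f : R -> E) : Prop :=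
  cadlag f /\ holder_semi mu f + endpoint0 mu f + endpoint1 mu f < +oo.

Definition Nint (f : R -> E) (sigma tau : R) : \bar R :=
  ereal_inf [set y : \bar R | exists theta : R,
     [/\ (sigma < theta)%R, (theta <= tau)%R &
     y = ereal_sup [set x : \bar R | exists s u : R,
           [/\ (sigma <= s)%R, (s < theta)%R, (theta <= u)%R, (u <= tau)%R &
               x = (Num.max (d (f sigma) (f s)) (d (f u) (f tau)))%:E]]]].

Definition Neta (f : R -> E) (eta : R) : \bar R :=
  ereal_sup [set x : \bar R | exists sigma tau : R,
     [/\ (0 <= sigma)%R, (sigma < tau)%R, (tau <= 1)%R, (tau - sigma <= eta)%R &
         x = Nint f sigma tau]].

Definition tilde_semi (mu : R) (f : R -> E) : \bar R :=
  ereal_sup [set x : \bar R | exists eta : R,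
     (0 < eta)%R /\ x = Neta f eta * ((eta `^ mu)^-1)%:E].

Definition wedge_semi (mu : R) (f : R -> E) : \bar R :=
  ereal_sup [set x : \bar R | exists s u : R,
     [/\ (0 < s)%R, (s < u)%R, (u <= 1)%R &
         x = ((Delta f s ((s + u) / 2) u / (u - s) `^ mu)%R)%:E]].

End Defs.

From HB Require Import structures.
From mathcomp Require Import all_boot all_order all_algebra.
From mathcomp Require Import all_classical all_reals all_analysis.
From mathcomp Require Import ring lra.
Set Implicit Arguments. Unset Strict Implicit. Unset Printing Implicit Defensive.
Import Order.TTheory GRing.Theory Num.Theory.
Local Open Scope classical_set_scope.
Local Open Scope ring_scope.

(* The first inequality is immediate, and the second holds even with constant 1,
   since Delta(f;s,t,u) <= N(f;(s,u)) whenever s <= t <= u.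
   For the third, call C admissible ([split_bound C]) if
   min(d(f a, f s), d(f u, f b)) <= C (b - a)^mu for all 0 <= a <= s <= u <= b <= 1.
   Finiteness of [f]_mu makes 2[f]_mu admissible. Splitting [a, b] at its midpoint,
   where [f]_{wedge mu} controls one of the two halves, shows that w + 2^-mu C is
   admissible whenever C is (w = [f]_{wedge mu}), so by iteration w / (1 - 2^-mu)
   is admissible. An admissible C bounds N(f;(sigma,tau)) by C (tau - sigma)^mu:
   take for theta the infimum of the s with d(f sigma, f s) > C (tau - sigma)^mu + e;
   right-continuity of f at sigma gives theta > sigma, and at theta it bounds
   d(f theta, f tau). *)

Lemma le_of_geometric (R : realType) (v A B r : R) :
  `|r| < 1 -> (forall n, v <= A + B * r ^+ n) -> v <= A.
Proof.
move=> r1 hv.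
have lim : (fun n => A + B * r ^+ n) @ \oo --> A + 0.
  by apply: cvgD; [exact: cvg_cst | exact: cvg_geometric].
rewrite addr0 in lim; apply: (cvgr_to_ge lim).
exact: nearW.
Qed.

Lemma powR_half (R : realType) (mu l : R) :
  0 <= l -> (l / 2) `^ mu = 2 `^ (- mu) * l `^ mu.
Proof.
by move=> l0; rewrite powRM // -powR_inv1 // -powRrM mulN1r mulrC.
Qed.

Lemma powR2N_lt1 (R : realType) (mu : R) : 0 < mu -> 2 `^ (- mu) < 1.
Proof.
move=> mu0; rewrite powRN invf_lt1 ?powR_gt0 //.
rewrite /powR ifF; last by apply/negbTE; rewrite pnatr_eq0.
by rewrite expR_gt1 mulr_gt0 // ln_gt0 // ltr1n.
Qed.

Section Seminorms.
Variables (R : realType) (E : Type) (d : E -> E -> R).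
Hypothesis hd : is_metric d.
Variables (mu : R) (f : R -> E).
Hypothesis mu_gt0 : 0 < mu.

Local Notation D x y := (d (f x) (f y)).
Local Notation r := (2 `^ (- mu)).

Lemma metric_ge0 x y : 0 <= d x y. Proof. by case: hd. Qed.
Lemma metric_xx x : d x x = 0. Proof. by case: hd => _ h _ _; apply/h. Qed.
Lemma metric_sym x y : d x y = d y x. Proof. by case: hd. Qed.
Lemma metric_triangle x y z : d x z <= d x y + d y z. Proof. by case: hd. Qed.

Lemma Delta_ge0 s t u : 0 <= Delta d f s t u.
Proof. by rewrite /Delta le_min !metric_ge0. Qed.

Lemma holder_semi_ge0 : (0 <= holder_semi d mu f)%E.
Proof.
apply: le_ereal_sup_tmp; eexists; first by exists 0, 0, 0; split.
by rewrite lee_fin divr_ge0 ?Delta_ge0 ?powR_ge0.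
Qed.

Lemma endpoint0_ge0 : (0 <= endpoint0 d mu f)%E.
Proof.
apply: le_ereal_sup_tmp; eexists; first by exists 1; split.
by rewrite lee_fin divr_ge0 ?metric_ge0 ?powR_ge0.
Qed.

Lemma endpoint1_ge0 : (0 <= endpoint1 d mu f)%E.
Proof.
apply: le_ereal_sup_tmp; eexists; first by exists 0; split.
by rewrite lee_fin divr_ge0 ?metric_ge0 ?powR_ge0.
Qed.

Lemma holder_semi_fin_num : in_Dmu d mu f -> holder_semi d mu f \is a fin_num.
Proof.
move=> [_ hfin]; rewrite ge0_fin_numE ?holder_semi_ge0 //.
apply: le_lt_trans hfin; rewrite -addeA leeDl // adde_ge0 //.
  exact: endpoint0_ge0.
exact: endpoint1_ge0.
Qed.

Lemma wedge_semi_ge0 : (0 <= wedge_semi d mu f)%E.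
Proof.
apply: le_ereal_sup_tmp; eexists; first by exists (1 / 2), 1; split => //; lra.
by rewrite lee_fin divr_ge0 ?Delta_ge0 ?powR_ge0.
Qed.

Lemma wedge_semi_le_holder_semi : (wedge_semi d mu f <= holder_semi d mu f)%E.
Proof.
apply: le_ereal_sup => x [s [u [s0 su u1 ->]]].
by exists s, ((s + u) / 2), u; split => //; lra.
Qed.

Lemma Delta_le_holder_semi H s t u : (holder_semi d mu f <= H%:E)%E ->
  0 <= s -> s <= t -> t <= u -> u <= 1 -> Delta d f s t u <= H * (u - s) `^ mu.
Proof.
move=> hH s0 st tu u1; case: (ltP s u) => [su | us]; last first.
  have [<- <-] : s = t /\ s = u by split; lra.
  by rewrite /Delta metric_xx minxx subrr powR0 ?mulr0 // gt_eqF.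
have p0 : 0 < (u - s) `^ mu by apply: powR_gt0; lra.
rewrite -ler_pdivrMr // -lee_fin; apply: le_trans hH.
by apply: ereal_sup_ubound; exists s, t, u.
Qed.

Lemma Delta_le_Nint s t u : s <= t -> t <= u -> s < u ->
  ((Delta d f s t u)%:E <= Nint d f s u)%E.
Proof.
move=> st tu su; apply/ereal_infP => y [th [h1 h2 ->]].
case: (ltP t th) => h.
- apply: le_ereal_sup_tmp; eexists; first by exists t, u; split => //; lra.
  by rewrite lee_fin /Delta le_max !ge_min !lexx ?orbT.
- apply: le_ereal_sup_tmp; eexists; first by exists s, t; split => //; lra.
  by rewrite lee_fin /Delta le_max !ge_min !lexx ?orbT.
Qed.

Lemma Nint_le_Neta sg ta eta : 0 <= sg -> sg < ta -> ta <= 1 -> ta - sg <= eta ->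
  (Nint d f sg ta <= Neta d f eta)%E.
Proof. by move=> *; apply: ereal_sup_ubound; exists sg, ta. Qed.

Lemma tilde_semi_ge0 : (0 <= tilde_semi d mu f)%E.
Proof.
apply: le_ereal_sup_tmp; eexists; first by exists 1; split.
rewrite powR1 invr1 mule1.
have hN : (Nint d f 0 1 <= Neta d f 1)%E by apply: Nint_le_Neta; lra.
have hD : ((Delta d f 0 0 1)%:E <= Nint d f 0 1)%E by apply: Delta_le_Nint; lra.
by apply: le_trans hN; apply: le_trans hD; rewrite lee_fin Delta_ge0.
Qed.

Lemma holder_semi_le_tilde_semi : (holder_semi d mu f <= tilde_semi d mu f)%E.
Proof.
apply: ge_ereal_sup => x [s [t [u [s0 st tu u1 ->]]]].
case: (ltP s u) => su; last first.
  by rewrite (_ : u - s = 0) ?powR0 ?gt_eqF ?invr0 ?mulr0 ?tilde_semi_ge0 //; lra.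
have p0 : 0 < (u - s) `^ mu by apply: powR_gt0; lra.
apply: le_ereal_sup_tmp; eexists; first by exists (u - s); split => //; lra.
rewrite EFinM; apply: lee_wpmul2r; first by rewrite lee_fin invr_ge0 ltW.
apply: le_trans (Delta_le_Nint st tu su) _.
by apply: Nint_le_Neta; lra.
Qed.

Definition split_bound (C : R) := forall a s u b,
  0 <= a -> a <= s -> s <= u -> u <= b -> b <= 1 ->
  Num.min (D a s) (D u b) <= C * (b - a) `^ mu.

Lemma holder_split_bound H : (holder_semi d mu f <= H%:E)%E -> split_bound (2 * H).
Proof.
move=> hH a s u b a0 as_ su ub b1.
have H0 : 0 <= H by rewrite -lee_fin; apply: le_trans hH; exact: holder_semi_ge0.
have hsb := Delta_le_holder_semi hH a0 as_ (le_trans su ub) b1.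
have hsu := Delta_le_holder_semi hH a0 as_ su (le_trans ub b1).
have mono : H * (u - a) `^ mu <= H * (b - a) `^ mu.
  by apply: ler_wpM2l => //; apply: (ge0_ler_powR (ltW mu_gt0)); rewrite ?nnegrE; lra.
have p0 : 0 <= H * (b - a) `^ mu by rewrite mulr_ge0 ?powR_ge0.
have := metric_triangle (f u) (f s) (f b); rewrite (metric_sym (f u) (f s)) -mulrA.

move: hsb hsu; rewrite /Delta !ge_min => /orP[h1|h1] /orP[h2|h2] ht;
  apply/orP; first [by left; lra | by right; lra].
Qed.

Hypothesis hc : cadlag d f.

Lemma tail_bound_left_closed th ta c : 0 <= th -> th < ta -> ta <= 1 ->
  (forall u, th < u -> u <= ta -> D u ta <= c) -> D th ta <= c.
Proof.
move=> th0 thta ta1 tail; apply/ler_addgt0Pr => e e0.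
have [del del0 near_th] := hc.1 th ltac:(apply/andP; split; lra) e e0.
pose v := Num.min (th + del / 2) ta.
have v1 : v <= th + del / 2 by rewrite /v ge_min lexx.
have v2 : v <= ta by rewrite /v ge_min lexx orbT.
have v3 : th < v by rewrite /v lt_min thta andbT; lra.
have := near_th v (ltW v3) ltac:(lra) ltac:(lra).
have := tail v v3 v2.
have := metric_triangle (f th) (f v) (f ta); rewrite (metric_sym (f th) (f v)).
lra.
Qed.

Lemma Nint_le_of_split_point sg ta th c : sg < th -> th <= ta ->
  (forall s, sg <= s -> s < th -> D sg s <= c) ->
  (forall u, th <= u -> u <= ta -> D u ta <= c) -> (Nint d f sg ta <= c%:E)%E.
Proof.
move=> sgth thta left right; apply: ge_ereal_inf; eexists; first by exists th.
apply: ge_ereal_sup => x [s [u [s1 s2 u1 u2 ->]]].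
by rewrite lee_fin ge_max left ?right.
Qed.

Lemma split_point_exists sg ta c e : 0 <= sg -> sg < ta -> ta <= 1 -> 0 < e ->
  (forall s u, sg <= s -> s <= u -> u <= ta -> Num.min (D sg s) (D u ta) <= c) ->
  exists th, [/\ sg < th, th <= ta,
    forall s, sg <= s -> s < th -> D sg s <= c + e &
    forall u, th <= u -> u <= ta -> D u ta <= c].
Proof.
move=> sg0 sgta ta1 e0 hsplit.
have c0 : 0 <= c.
  by have := hsplit sg ta (lexx sg) (ltW sgta) (lexx ta); rewrite !metric_xx minxx.
pose S := [set s | sg <= s <= ta /\ c + e < D sg s].
have tail_S s' u : S s' -> s' <= u -> u <= ta -> D u ta <= c.
  move=> [/andP[sgs' _] big] s'u uta.
  by have := hsplit s' u sgs' s'u uta; rewrite ge_min => /orP[] //; lra.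
have [[s1 Ss1]|S0] := pselect (S !=set0); last first.
  exists ta; split=> // [s sgs sta | u tau uta].
    by rewrite leNgt; apply/negP => big; apply: S0; exists s; split => //; lra.
  by rewrite (_ : u = ta) ?metric_xx //; lra.
have [del del0 near_sg] := hc.1 sg ltac:(apply/andP; split; lra) (c + e) ltac:(lra).
have sg_lt_inf : sg < inf S.
  suff : sg + del <= inf S by lra.
  apply: lb_le_inf; first by exists s1.
  move=> s [/andP[sgs sta] big]; rewrite leNgt; apply/negP => sdel.
  by have := near_sg s sgs sdel ltac:(lra); rewrite metric_sym; lra.
have inf_le : inf S <= ta.
  by apply: le_trans (ge_inf _ Ss1) _; [exists sg => s [/andP[]] | case: Ss1 => /andP[]].
have tail u : inf S < u -> u <= ta -> D u ta <= c.
  by move=> infu uta; have [s' Ss' s'u] := inf_lt (ex_intro _ s1 Ss1) infu; apply: tail_S (ltW s'u) uta.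
exists (inf S); split=> // [s sgs sinf | u infu uta].
  rewrite leNgt; apply/negP => big.
  have : inf S <= s by apply: ge_inf; [exists sg => ? [/andP[]] | split => //; apply/andP; split; lra].
  lra.
case: (ltP (inf S) u) => [infu' | uinf]; first exact: tail.
have <- : inf S = u by lra.
case: (ltP (inf S) ta) => [infta | tainf].
  by apply: tail_bound_left_closed => //; lra.
by rewrite (_ : inf S = ta) ?metric_xx //; lra.
Qed.

Lemma Nint_le sg ta c : 0 <= sg -> sg < ta -> ta <= 1 ->
  (forall s u, sg <= s -> s <= u -> u <= ta -> Num.min (D sg s) (D u ta) <= c) ->
  (Nint d f sg ta <= c%:E)%E.
Proof.
move=> sg0 sgta ta1 hsplit; apply/lee_addgt0Pr => e e0.
have [th [sgth thta left right]] := split_point_exists sg0 sgta ta1 e0 hsplit.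
rewrite -EFinD; apply: (Nint_le_of_split_point sgth thta left) => u thu uta.
by have := right u thu uta; lra.
Qed.

Lemma tilde_semi_le_of_split_bound C : split_bound C -> (tilde_semi d mu f <= C%:E)%E.
Proof.
move=> hC.
have C0 : 0 <= C.
  have := hC 0 0 1 1 (lexx 0) (lexx 0) ler01 (lexx 1) (lexx 1).
  by rewrite !metric_xx minxx subr0 powR1 mulr1.
apply: ge_ereal_sup => x [eta [eta0 ->]].
have pe : 0 < eta `^ mu by apply: powR_gt0.
have hN : (Neta d f eta <= (C * eta `^ mu)%:E)%E.
  apply: ge_ereal_sup => y [sg [ta [sg0 sgta ta1 tae ->]]].
  apply: Nint_le => // s u sgs su uta.
  apply: le_trans (hC sg s u ta sg0 sgs su uta ta1) _.
  by apply: ler_wpM2l => //; apply: (ge0_ler_powR (ltW mu_gt0)); rewrite ?nnegrE; lra.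
apply: le_trans (lee_wpmul2r _ hN) _; first by rewrite lee_fin invr_ge0 ltW.
by rewrite -EFinM mulfK // gt_eqF.
Qed.

Section Contraction.
Variable w : R.
Hypothesis hw : (wedge_semi d mu f <= w%:E)%E.

Lemma wedge_bound_ge0 : 0 <= w.
Proof. by rewrite -lee_fin; apply: le_trans hw; exact: wedge_semi_ge0. Qed.

Lemma Delta_mid_le_interior a b : 0 < a -> a < b -> b <= 1 ->
  Delta d f a ((a + b) / 2) b <= w * (b - a) `^ mu.
Proof.
move=> a0 ab b1; have p0 : 0 < (b - a) `^ mu by apply: powR_gt0; lra.
rewrite -ler_pdivrMr // -lee_fin; apply: le_trans hw.
by apply: ereal_sup_ubound; exists a, b.
Qed.

Lemma Delta_mid_le a b : 0 <= a -> a < b -> b <= 1 ->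
  Delta d f a ((a + b) / 2) b <= w * (b - a) `^ mu.
Proof.
move=> a0 ab b1; have [a_gt0 | a_le0] := ltP 0 a; first exact: Delta_mid_le_interior.
have a_eq0 : a = 0 by lra.
subst a.
(* [wedge_semi] only sees intervals with a > 0: approximate [0, b] by [s, b],
   using right-continuity at 0 and at b / 2. *)
apply/ler_addgt0Pr => e e0.
have [del0 del0_gt0 near0] := hc.1 0 ltac:(apply/andP; split; lra) (e / 2) ltac:(lra).
have [delm delm_gt0 nearm] :=
  hc.1 ((0 + b) / 2) ltac:(apply/andP; split; lra) (e / 2) ltac:(lra).
pose mn := Num.min (Num.min del0 delm) b.
have mn_del0 : mn <= del0 by rewrite /mn !ge_min lexx.
have mn_delm : mn <= delm by rewrite /mn !ge_min lexx orbT.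
have mn_b : mn <= b by rewrite /mn !ge_min lexx orbT.
have mn_gt0 : 0 < mn by rewrite /mn !lt_min del0_gt0 delm_gt0 ab.
pose s := mn / 2.
have s_gt0 : 0 < s by rewrite /s; lra.
have s_b : s < b by rewrite /s; lra.
pose m := (s + b) / 2.
have hs := Delta_mid_le_interior s_gt0 s_b b1; rewrite -/m in hs.
have mono : w * (b - s) `^ mu <= w * (b - 0) `^ mu.
  apply: ler_wpM2l; first exact: wedge_bound_ge0.
  by apply: (ge0_ler_powR (ltW mu_gt0)); rewrite ?nnegrE; lra.
have h0 : D s 0 < e / 2 by apply: near0; rewrite /s; lra.
have hm : D m ((0 + b) / 2) < e / 2 by apply: nearm; rewrite /m /s; lra.
have t1 := metric_triangle (f 0) (f s) (f ((0 + b) / 2)).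
have t2 := metric_triangle (f s) (f m) (f ((0 + b) / 2)).
have t3 := metric_triangle (f ((0 + b) / 2)) (f m) (f b).
rewrite (metric_sym (f 0) (f s)) in t1.
rewrite (metric_sym (f ((0 + b) / 2)) (f m)) in t3.
move: hs; rewrite /Delta !ge_min => /orP[h|h]; apply/orP; first [by left; lra | by right; lra].
Qed.

Lemma split_bound_contract C : split_bound C -> split_bound (w + r * C).
Proof.
move=> hC a s u b a0 as_ su ub b1.
have [ab | ba] := ltP a b; last first.
  have [<- <- <-] : [/\ a = s, a = u & a = b] by split; lra.
  by rewrite metric_xx minxx subrr powR0 ?mulr0 // gt_eqF.
pose m := (a + b) / 2; pose p := (b - a) `^ mu.
have hma : (m - a) `^ mu = r * p by rewrite -powR_half; [congr (_ `^ _); rewrite /m|]; lra.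
have hbm : (b - m) `^ mu = r * p by rewrite -powR_half; [congr (_ `^ _); rewrite /m|]; lra.
have wp0 : 0 <= w * p by rewrite mulr_ge0 ?powR_ge0 ?wedge_bound_ge0.
have hmid := Delta_mid_le a0 ab b1; rewrite -/m -/p in hmid.
rewrite mulrDl -mulrA (mulrC C) mulrA -/p.
move: hmid; rewrite /Delta ge_min => /orP[left_half | right_half].
- have := metric_triangle (f a) (f m) (f s).
  have [s_le_m | m_lt_s] := lerP s m.
  + have := hC a s s m a0 as_ (lexx s) s_le_m ltac:(rewrite /m; lra).
    rewrite hma (metric_sym (f s) (f m)) !ge_min => /orP[h|h] ht;
    apply/orP; left; lra.
  + have := hC m s u b ltac:(rewrite /m; lra) (ltW m_lt_s) su ub b1.
    rewrite hbm !ge_min => /orP[h|h] ht;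
    apply/orP; first [by left; lra | by right; lra].
- have := metric_triangle (f u) (f m) (f b).
  have [u_lt_m | m_le_u] := ltP u m.
  + have := hC a s u m a0 as_ su (ltW u_lt_m) ltac:(rewrite /m; lra).
    rewrite hma !ge_min => /orP[h|h] ht;
    apply/orP; first [by left; lra | by right; lra].
  + have := hC m u u b ltac:(rewrite /m; lra) m_le_u (lexx u) ub b1.
    rewrite hbm (metric_sym (f m) (f u)) !ge_min => /orP[h|h] ht;
    apply/orP; right; lra.
Qed.

Lemma split_bound_fixpoint C : split_bound C -> split_bound (w / (1 - r)).
Proof.
move=> hC; have r_gt0 : 0 < r by apply: powR_gt0.
have r_lt1 := powR2N_lt1 mu_gt0.
pose K := w / (1 - r).
have iter n : split_bound (K + (C - K) * r ^+ n).
  elim: n => [|n IH]; first by rewrite expr0 mulr1 addrC subrK.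
  suff -> : K + (C - K) * r ^+ n.+1 = w + r * (K + (C - K) * r ^+ n).
    exact: split_bound_contract.
  by rewrite /K exprS; field; rewrite subr_eq0 gt_eqF.
move=> a s u b a0 as_ su ub b1.
apply: (@le_of_geometric _ _ _ ((C - K) * (b - a) `^ mu) r).
  by rewrite ger0_norm // ltW.
move=> n; have := iter n a s u b a0 as_ su ub b1.
by rewrite mulrDl -mulrA (mulrC (_ ^+ n)) mulrA.
Qed.

End Contraction.

End Seminorms.

Theorem lemma2 (R : realType) (E : Type) (d : E -> E -> R)
  (hE : polish d) (mu : R) (hmu0 : 0 < mu) (hmu1 : mu < 1)
  (f : R -> E) (hf : in_Dmu d mu f) :
  (wedge_semi d mu f <= holder_semi d mu f)%E /\
  (holder_semi d mu f <= 2%:E * tilde_semi d mu f)%E /\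
  (2%:E * tilde_semi d mu f <= (2 / (1 - 2 `^ (- mu)))%:E * wedge_semi d mu f)%E.
Proof.
have [hd _] := hE; have [hc _] := hf.
split; first exact: wedge_semi_le_holder_semi.
split.
  apply: le_trans (holder_semi_le_tilde_semi hd f hmu0) _.
  by apply: lee_pemull; [exact: tilde_semi_ge0 | rewrite lee_fin ler1n].
have hsplit : split_bound d mu f (2 * fine (holder_semi d mu f)).
  by apply: holder_split_bound => //; rewrite fineK ?holder_semi_fin_num.
have r_lt1 := powR2N_lt1 hmu0.
have := wedge_semi_ge0 hd mu f.
case hw : (wedge_semi d mu f) => [w| |] // w_ge0; last first.
  by rewrite gt0_muley ?leey // lte_fin divr_gt0 // subr_gt0.
have hw_le : (wedge_semi d mu f <= w%:E)%E by rewrite hw.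
have := tilde_semi_le_of_split_bound hd hmu0 hc
  (split_bound_fixpoint hd hmu0 hc hw_le hsplit).
have two_ge0 : (0 <= 2%:E :> \bar R)%E by rewrite lee_fin.
move=> /(lee_wpmul2l two_ge0) /le_trans; apply.
by rewrite -!EFinM lee_fin mulrA mulrAC.
Qed.
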